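(* Let $k$ be a field, $R=k[x_1,\ldots,x_n]$, and let $I$ be an almost reverse lexicographic ideal in $R$ whose last generator is $M_\omega=x^\omega$ with $\omega=(\omega_1,\ldots,\omega_\mu)$, $\omega_\mu>0$, $\mu\ge2$. Let $1\le i\le\mu-1$. For every $\alpha=(\alpha_1,\ldots,\alpha_i)\in\mathcal{I}_i$: (1) $0<f_{i+1}(\alpha)<\infty$; (2) $x^\alpha x_{i+1}^{f_{i+1}(\alpha)}\in\mathcal{G}(I)$; (3) if $\alpha_j\ge1$ for some $1\le j\le i$, then $f_{i+1}(\alpha_1,\ldots,\alpha_j,\ldots,\alpha_i)+1\le f_{i+1}(\alpha_1,\ldots,\alpha_j-1,\ldots,\alpha_i)$.
   Context: Monomial order: degree reverse lexicographic: for $M=x^\alpha,N=x^\beta$, $M>N$ iff $\deg M>\deg N$, or degrees are equal and for the largest $s$ with $\alpha_s\neq\beta_s$ one has $\alpha_s<\beta_s$. For $\alpha\in\mathbb{Z}^s_{\ge0}$, $x^\alpha=x_1^{\alpha_1}\cdots x_s^{\alpha_s}$, $|\alpha|=\sum\alpha_j$, and $\alpha\le\beta$ iff $x^\alpha\le x^\beta$. A monomial ideal $I$ is almost reverse lexicographic if for every monomial $M$ and every minimal monomial generator $N$ of $I$ with $\deg M=\deg N$ and $M>N$, one has $M\in I$. $\mathcal{G}(I)$ is the minimal monomial generating set; $\max M$ is the largest $i$ with $x_i\mid M$. The last generator $M_\omega$ is the element of $\mathcal{G}(I)$ of maximal degree that is smallest in the order among elements of $\mathcal{G}(I)$ of that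 degree; $\mu=\max M_\omega$. $f_1=\min\{t:x_1^t\in I\}$; for $2\le i\le\mu$, $\alpha\in\mathbb{Z}^{i-1}_{\ge0}$, $f_i(\alpha)=\min\{t\ge0:x^\alpha x_i^t\in I\}\in\mathbb{Z}_{\ge0}\cup\{\infty\}$. For $1\le i\le\mu-2$, $\mathcal{I}_i=\{(\alpha_1,\ldots,\alpha_i)\in\mathbb{Z}^i_{\ge0}: 0\le\alpha_1<f_1,\ 0\le\alpha_j<f_j(\alpha_1,\ldots,\alpha_{j-1})\ (2\le j\le i)\}$, and $\mathcal{I}_{\mu-1}$ is the set of $(\alpha_1,\ldots,\alpha_{\mu-1})$ satisfying these inequalities for $j\le\mu-1$ together with $(\alpha_1,\ldots,\alpha_{\mu-1})\ge(\omega_1,\ldots,\omega_{\mu-1})$. *)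

(* Monomial ideals of k[x_1,...,x_n] are represented by their
   sets of exponent vectors. Variable x_{j+1} <-> ordinal j. *)
From mathcomp Require Import all_boot.
From Stdlib Require Import ClassicalEpsilon.
Set Implicit Arguments. Unset Strict Implicit. Unset Printing Implicit Defensive.

Definition mon (n : nat) := {ffun 'I_n -> nat}.

Section Mon.
Variable n : nat.

Definition deg (a : mon n) : nat := \sum_(j < n) a j.

Definition mdiv (a b : mon n) : bool := [forall j, a j <= b j].

(* exponent of x_{j+1} (0 outside the range) *)
Definition cf (a : mon n) (j : nat) : nat :=
  match @insub nat (fun k => k < n) 'I_n j with Some k => a k | None => 0 end.

Definition pad (s : seq nat) : mon n := [ffun j : 'I_n => nth 0 s j].

Definition trunc (k : nat) (a : mon n) : mon n :=
  [ffun j : 'I_n => if j < k then a j else 0].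

(* degree reverse lexicographic order: revlex_gt a b  <=>  x^a > x^b *)
Definition revlex_gt (a b : mon n) : bool :=
  (deg b < deg a) ||
  ((deg a == deg b) &&
   [exists s : 'I_n, (a s < b s) && [forall t : 'I_n, (s < t) ==> (a t == b t)]]).

Definition revlex_ge (a b : mon n) : bool := (a == b) || revlex_gt a b.

Definition monomial_ideal (I : pred (mon n)) : Prop :=
  forall a b, a \in I -> mdiv a b -> b \in I.

Definition mingen (I : pred (mon n)) (a : mon n) : Prop :=
  a \in I /\ forall b, b \in I -> mdiv b a -> b = a.

Definition almost_revlex (I : pred (mon n)) : Prop :=
  forall M N, mingen I N -> deg M = deg N -> revlex_gt M N -> M \in I.

Definition last_generator (I : pred (mon n)) (w : mon n) : Prop :=
  mingen I w /\
  forall g, mingen I g -> deg g <= deg w /\ (deg g = deg w -> revlex_ge g w).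

(* extended naturals Z_{>=0} u {oo}: None = oo *)
Definition minx (P : pred nat) : option nat :=
  match excluded_middle_informative (exists t, P t) with
  | left h => Some (ex_minn h)
  | right _ => None
  end.

Definition lt_ext (a : nat) (o : option nat) : bool :=
  if o is Some t then a < t else true.

Definition le_ext (o1 o2 : option nat) : bool :=
  match o1, o2 with
  | _, None => true
  | None, Some _ => false
  | Some a, Some b => a <= b
  end.

(* f I alpha, for alpha = (alpha_1,...,alpha_{j-1}), is f_j(alpha)
   = min { t : x^alpha x_j^t \in I }; f I [::] is f_1 *)
Definition fI (I : pred (mon n)) (alpha : seq nat) : option nat :=
  minx (fun t => pad (rcons alpha t) \in I).

Definition in_Ical (I : pred (mon n)) (w : mon n) (mu i : nat) (alpha : seq nat)
  : Prop :=
  size alpha = i /\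
  (forall j, j < i -> lt_ext (nth 0 alpha j) (fI I (take j alpha))) /\
  (i = mu.-1 -> revlex_ge (pad alpha) (trunc mu.-1 w)).

End Mon.

From mathcomp Require Import all_boot zify.
From Stdlib Require Import Classical ClassicalEpsilon.
Set Implicit Arguments. Unset Strict Implicit. Unset Printing Implicit Defensive.

(* Almost revlex ideals are strongly stable: a generator g dividing m either divides
   x_j m / x_k already, or carries the full power of x_k, and then x_j g / x_k has the
   same degree, is larger in revlex, hence lies in I and divides x_j m / x_k.
   In a strongly stable ideal, x^alpha x_(i+1)^t with t minimal is a minimal generator
   (dividing out any earlier variable can be traded for x_(i+1)), and lowering alpha_j
   raises the minimal t.  Finiteness comes from the last generator M_omega: every
   monomial in x_1 .. x_(mu-1) of degree at least deg M_omega is revlex-larger than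
   M_omega, and for i = mu - 1 the condition alpha >= omega survives homogenizing
   both sides with x_mu to degree deg M_omega. *)

Lemma minx_some (P : pred nat) t : minx P = Some t -> P t /\ forall u, P u -> t <= u.
Proof.
rewrite /minx; case: excluded_middle_informative => // exP [<-].
by case: ex_minnP.
Qed.

Lemma minx_none (P : pred nat) u : minx P = None -> ~~ P u.
Proof.
rewrite /minx; case: excluded_middle_informative => // no_t _.
by apply/negP => Pu; apply: no_t; exists u.
Qed.

Lemma minx_ex (P : pred nat) u : P u -> exists t, minx P = Some t.
Proof.
rewrite /minx; case: excluded_middle_informative => [exP _ | no_t Pu]; first by eexists.
by case: no_t; exists u.
Qed.

Lemma eq_minx (P Q : pred nat) : P =1 Q -> minx P = minx Q.
Proof.
move=> PQ; case EP: (minx P) => [t|]; case EQ: (minx Q) => [t'|] //.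
- have [Pt Pmin] := minx_some EP; have [Qt Qmin] := minx_some EQ.
  by congr Some; apply/eqP; rewrite eqn_leq Pmin ?PQ // Qmin -?PQ.
- by have [Pt _] := minx_some EP; move: (minx_none t EQ); rewrite -PQ Pt.
- by have [Qt _] := minx_some EQ; move: (minx_none t' EP); rewrite PQ Qt.
Qed.

Section Monomials.
Variable n : nat.
Implicit Types (a b m : mon n) (I : pred (mon n)).

Lemma mdivP a b : reflect (forall j, a j <= b j) (mdiv a b).
Proof. exact: forallP. Qed.

Lemma mdiv_trans a b m : mdiv a b -> mdiv b m -> mdiv a m.
Proof. by move=> /mdivP ab /mdivP bm; apply/mdivP => j; apply: leq_trans (ab j) (bm j). Qed.

Lemma leq_coef_deg a j : a j <= deg a.
Proof. by rewrite /deg (bigD1 j) //= leq_addr. Qed.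

Lemma mdiv_lt a b : mdiv a b -> a != b -> exists j, a j < b j.
Proof.
move=> /mdivP ab neq; apply/existsP; apply: contraNT neq => /existsPn no_lt.
by apply/eqP/ffunP => j; apply/eqP; rewrite eqn_leq ab leqNgt no_lt.
Qed.

Lemma mdiv_ltn_deg a b : mdiv a b -> a != b -> deg a < deg b.
Proof.
move=> ab neq; have [j lt_j] := mdiv_lt ab neq; have /mdivP ab' := ab.
rewrite /deg (bigD1 j) //= [X in _ < X](bigD1 j) //= -addSn.
by apply: leq_add lt_j _; apply: leq_sum => u _; apply: ab'.
Qed.

Definition upd a (k : 'I_n) v : mon n := [ffun j => if j == k then v else a j].

Lemma updE a k v j : upd a k v j = if j == k then v else a j.
Proof. by rewrite ffunE. Qed.

Lemma upd_id a k v : a k = v -> upd a k v = a.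
Proof. by move=> akv; apply/ffunP => j; rewrite updE; case: eqVneq => // ->. Qed.

Lemma upd_upd a k v v' : upd (upd a k v) k v' = upd a k v'.
Proof. by apply/ffunP => j; rewrite !updE; case: eqVneq. Qed.

Lemma deg_upd a k v : deg (upd a k v) + a k = deg a + v.
Proof.
have -> : deg a = a k + \sum_(j < n | j != k) a j by rewrite /deg (bigD1 k).
suff -> : deg (upd a k v) = v + \sum_(j < n | j != k) a j by lia.
rewrite /deg (bigD1 k) //= updE eqxx; congr (_ + _).
by apply: eq_bigr => j /negbTE jk; rewrite updE jk.
Qed.

Lemma divisor_deg a d : d <= deg a -> exists2 b, mdiv b a & deg b = d.
Proof.
elim: d => [|d IH] le_da.
  by exists [ffun => 0]; [apply/mdivP => j; rewrite ffunE | rewrite /deg big1 // => j; rewrite ffunE].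
have [b ba deg_b] := IH (ltnW le_da).
have [l lt_l] : exists l, b l < a l.
  by apply: mdiv_lt ba _; apply: contraTneq le_da => <-; rewrite deg_b ltnn.
exists (upd b l (b l).+1); last by have := deg_upd b l (b l).+1; lia.
by apply/mdivP => j; rewrite updE; case: eqVneq => [->|_] //; move/mdivP: ba.
Qed.

Lemma mingen_exists I a : a \in I -> exists2 g, mingen I g & mdiv g a.
Proof.
have [d] := ubnP (deg a); elim: d a => // d IH a lt_ad aI.
have [a_gen | a_not_gen] := classic (mingen I a); first by exists a => //; apply/mdivP.
have [b [bI ba neq]] : exists b, [/\ b \in I, mdiv b a & b != a].
  apply: NNPP => no_b; apply: a_not_gen; split => // b bI ba.
  by apply/eqP; apply: contraT => neq; exfalso; apply: no_b; exists b.
have [g g_gen gb] := IH b (leq_trans (mdiv_ltn_deg ba neq) lt_ad) bI.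
by exists g => //; apply: mdiv_trans gb ba.
Qed.

(* [mshift m j k] is the exponent of [x^m x_j / x_k]. *)
Definition mshift m (j k : 'I_n) : mon n := upd (upd m j (m j).+1) k (m k).-1.

Lemma mshiftE m (j k u : 'I_n) :
  mshift m j k u = if u == k then (m k).-1 else if u == j then (m j).+1 else m u.
Proof. by rewrite !updE. Qed.

Lemma deg_mshift m (j k : 'I_n) : j != k -> 0 < m k -> deg (mshift m j k) = deg m.
Proof.
move=> /negbTE jk mk; have := deg_upd m j (m j).+1.
have := deg_upd (upd m j (m j).+1) k (m k).-1; rewrite updE eq_sym jk /mshift; lia.
Qed.

Definition strongly_stable I : Prop :=
  forall m (j k : 'I_n), m \in I -> j < k -> 0 < m k -> mshift m j k \in I.

Lemma revlex_gt_witness a b (s : 'I_n) :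
  deg a = deg b -> a s < b s -> (forall u : 'I_n, s < u -> a u = b u) ->
  revlex_gt a b.
Proof.
move=> deg_ab lt_s eq_after; rewrite /revlex_gt deg_ab eqxx ltnn /=.
by apply/existsP; exists s; rewrite lt_s; apply/forallP => u; apply/implyP => su; rewrite eq_after.
Qed.

(* Dehomogenization with respect to [x_s] preserves the reverse lexicographic order. *)
Lemma revlex_ge_upd a b (s : 'I_n) ta tb :
  (forall u : 'I_n, s <= u -> a u = 0) -> (forall u : 'I_n, s <= u -> b u = 0) ->
  deg a + ta = deg b + tb -> revlex_ge a b -> revlex_ge (upd a s ta) (upd b s tb).
Proof.
move=> a_supp b_supp deg_ab /orP[/eqP eq_ab | gt_ab].
  by rewrite eq_ab in deg_ab *; rewrite (_ : ta = tb) /revlex_ge ?eqxx //; lia.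
have deg_upd_ab : deg (upd a s ta) = deg (upd b s tb).
  by have := deg_upd a s ta; have := deg_upd b s tb; rewrite a_supp ?b_supp //; lia.
apply/orP; right; move: gt_ab; rewrite /revlex_gt.
case/orP=> [lt_deg | /andP[/eqP eq_deg /existsP[r /andP[lt_r /forallP eq_after]]]].
  apply: (revlex_gt_witness (s := s)) => //; first by rewrite !updE eqxx; lia.
  by move=> u su; rewrite !updE -val_eqE gtn_eqF // a_supp ?b_supp // ltnW.
have rs : r < s by rewrite ltnNge; apply: contraTN lt_r => sr; rewrite b_supp.
apply: (revlex_gt_witness (s := r)) => //.
  by rewrite !updE -val_eqE ltn_eqF.
move=> u ru; rewrite !updE; case: eqVneq => _; first lia.
by have /implyP/(_ ru)/eqP := eq_after u.
Qed.

End Monomials.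

Section AlmostRevlex.
Variables (n : nat) (I : pred (mon n)).
Hypotheses (I_ideal : monomial_ideal I) (I_arl : almost_revlex I).

Lemma almost_revlex_strongly_stable : strongly_stable I.
Proof.
move=> m j k mI jk mk; have jk' : j != k by rewrite -val_eqE ltn_eqF.
have [g g_gen /mdivP gm] := mingen_exists mI.
case: (ltnP (g k) (m k)) => [gk | mk_gk].
  apply: I_ideal g_gen.1 _; apply/mdivP => u; rewrite mshiftE.
  by case: eqVneq => [-> | _]; [lia | case: eqVneq => [-> | _]; [exact: leqW | exact: gm]].
have gk : 0 < g k by lia.
(* Moving one degree from [x_k] to the earlier variable [x_j] raises a generator in revlex order. *)
have shift_gI : mshift g j k \in I.
  apply: I_arl g_gen (deg_mshift jk' gk) _.
  apply: (revlex_gt_witness (s := k)); [exact: deg_mshift | by rewrite mshiftE eqxx; lia |].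
  by move=> u ku; rewrite mshiftE -!val_eqE !gtn_eqF // (ltn_trans jk).
apply: I_ideal shift_gI _; apply/mdivP => u; rewrite !mshiftE.
by case: eqVneq => _; [have := gm k; lia | case: eqVneq => _; [rewrite ltnS |]; exact: gm].
Qed.

Section LastGenerator.
Variables (w : mon n) (s : 'I_n).
Hypotheses (w_gen : mingen I w) (w_s : 0 < w s) (w_zero : forall u : 'I_n, s < u -> w u = 0).

Lemma mem_of_deg_ge (a : mon n) :
  (forall u : 'I_n, s <= u -> a u = 0) -> deg w <= deg a -> a \in I.
Proof.
move=> a_supp le_wa; have [b ba deg_b] := divisor_deg le_wa.
have b_supp (u : 'I_n) : s <= u -> b u = 0.
  by move=> su; apply/eqP; rewrite -leqn0 -(a_supp u su); move/mdivP: ba.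
apply: I_ideal ba; apply: (I_arl w_gen deg_b).
apply: (revlex_gt_witness (s := s)) => //; first by rewrite b_supp.
by move=> u su; rewrite b_supp ?w_zero // ltnW.
Qed.

Lemma exists_upd_mem (a : mon n) (k : 'I_n) :
  (forall u : 'I_n, k <= u -> a u = 0) -> k <= s ->
  ((k : nat) = s -> revlex_ge a (trunc s w)) -> exists t, upd a k t \in I.
Proof.
move=> a_supp; rewrite leq_eqVlt => /orP[/eqP ks a_ge | lt_ks _].
  have {}ks : k = s by apply: val_inj.
  subst k; have [le_wa | lt_aw] := leqP (deg w) (deg a).
    by exists 0; rewrite upd_id ?a_supp //; apply: mem_of_deg_ge.
  exists (deg w - deg a); set t := deg w - deg a.
  have trunc_supp (u : 'I_n) : s <= u -> trunc s w u = 0 by move=> su; rewrite ffunE ltnNge su.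
  have w_upd : upd (trunc s w) s (w s) = w.
    apply/ffunP => u; rewrite updE ffunE; case: eqVneq => [-> // | us].
    by case: ltnP => // su; rewrite w_zero // ltn_neqAle val_eqE eq_sym us.
  have deg_w : deg (trunc s w) + w s = deg w.
    by have := deg_upd (trunc s w) s (w s); rewrite w_upd trunc_supp // addn0 => ->.
  have deg_at : deg (upd a s t) = deg w by have := deg_upd a s t; rewrite a_supp //; lia.
  have /orP[/eqP -> | gt_w] : revlex_ge (upd a s t) w.
    by rewrite -w_upd; apply: revlex_ge_upd => //; [lia | exact: a_ge].
  - exact: w_gen.1.
  - exact: I_arl w_gen deg_at gt_w.
exists (deg w); apply: mem_of_deg_ge.
  move=> u su; have ku : k < u := leq_trans lt_ks su.
  by rewrite updE -val_eqE gtn_eqF // a_supp // ltnW.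
by have := leq_coef_deg (upd a k (deg w)) k; rewrite updE eqxx.
Qed.

End LastGenerator.
End AlmostRevlex.

Section StronglyStable.
Variables (n : nat) (I : pred (mon n)).
Hypotheses (I_ideal : monomial_ideal I) (I_stable : strongly_stable I).

Lemma mingen_of_last_var m (k : 'I_n) :
  m \in I -> (forall u : 'I_n, k < u -> m u = 0) -> upd m k (m k).-1 \notin I ->
  mingen I m.
Proof.
move=> mI m_supp dec_notin.
have mk : 0 < m k by rewrite lt0n; apply: contraNneq dec_notin => mk0; rewrite mk0 upd_id.
split=> // b bI bm; case: (eqVneq b m) => // neq; case/negP: dec_notin.
have [l lt_l] := mdiv_lt bm neq.
have decl_I : upd m l (m l).-1 \in I.
  apply: I_ideal bI _; apply/mdivP => u; rewrite updE.
  by case: eqVneq => [-> | _]; [lia | move/mdivP: bm].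
case: (ltngtP l k) => [lk | kl | /val_inj <- //].
  have kl : (k == l) = false by rewrite -val_eqE gtn_eqF.
  have -> : upd m k (m k).-1 = mshift (upd m l (m l).-1) l k.
    apply/ffunP => u; rewrite mshiftE !updE eqxx kl.
    by case: eqVneq => // _; case: eqVneq => [-> | //]; lia.
  by apply: I_stable decl_I lk _; rewrite updE kl.
by move: lt_l; rewrite m_supp.
Qed.

(* [upd a k t] encodes [x^a x_k^t]. *)
Section Fiber.
Variables (a : mon n) (k : 'I_n) (t : nat).
Hypotheses (a_supp : forall u : 'I_n, k <= u -> a u = 0) (a_notin : a \notin I).
Hypothesis fiber_min : minx (fun u => upd a k u \in I) = Some t.

Let t_spec := minx_some fiber_min.

Lemma fiber_pos : 0 < t.
Proof.
rewrite lt0n; apply: contraNneq a_notin => t0.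
by have := t_spec.1; rewrite t0 upd_id ?a_supp.
Qed.

Lemma fiber_mingen : mingen I (upd a k t).
Proof.
apply: (mingen_of_last_var (k := k) t_spec.1).
  by move=> u ku; rewrite updE -val_eqE gtn_eqF // a_supp // ltnW.
rewrite updE eqxx upd_upd; apply/negP => /t_spec.2.
by have := fiber_pos; case: t => // t' _; rewrite ltnn.
Qed.

Lemma fiber_dec (j : 'I_n) : j < k -> 0 < a j ->
  le_ext (Some t.+1) (minx (fun u => upd (upd a j (a j).-1) k u \in I)).
Proof.
move=> jk aj; case E: minx => [t'|] //=; have [t'_in _] := minx_some E.
have jk' : (j == k) = false by rewrite -val_eqE ltn_eqF.
have le_tt' : t <= t'.
  apply: t_spec.2; apply: I_ideal t'_in _; apply/mdivP => u; rewrite !updE.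
  by case: eqVneq => // _; case: eqVneq => [-> | //]; exact: leq_pred.
have t'_pos : 0 < t' := leq_trans fiber_pos le_tt'.
rewrite -(prednK t'_pos) ltnS; apply: t_spec.2.
have -> : upd a k t'.-1 = mshift (upd (upd a j (a j).-1) k t') j k.
  apply/ffunP => u; rewrite mshiftE !updE !eqxx jk'.
  by case: eqVneq => // _; case: eqVneq => [-> | //]; lia.
by apply: I_stable t'_in jk _; rewrite updE eqxx.
Qed.

End Fiber.
End StronglyStable.

Section Sequences.
Variables (n : nat) (I : pred (mon n)).

Lemma pad_default s (u : 'I_n) : size s <= u -> pad n s u = 0.
Proof. by move=> su; rewrite ffunE nth_default. Qed.

Lemma pad_rcons s t (k : 'I_n) : (k : nat) = size s -> pad n (rcons s t) = upd (pad n s) k t.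
Proof.
move=> ks; apply/ffunP => u; rewrite updE !ffunE nth_rcons -ks -val_eqE.
by case: ltngtP => // ku; rewrite nth_default // -ks ltnW.
Qed.

Lemma pad_set_nth s (j : 'I_n) v : pad n (set_nth 0 s j v) = upd (pad n s) j v.
Proof. by apply/ffunP => u; rewrite updE !ffunE nth_set_nth /= -val_eqE. Qed.

Lemma fI_pad s (k : 'I_n) :
  (k : nat) = size s -> fI I s = minx (fun t => upd (pad n s) k t \in I).
Proof. by move=> ks; apply: eq_minx => t; rewrite (pad_rcons _ ks). Qed.

Lemma lt_ext_fI_notin s x : lt_ext x (fI I s) -> pad n (rcons s x) \notin I.
Proof.
rewrite /fI; case E: minx => [t|] /=; last by move=> _; apply: minx_none E.
by move=> lt_xt; apply: contraTN lt_xt => /(minx_some E).2; rewrite leqNgt.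
Qed.

Lemma in_Ical_notin w mu i alpha :
  0 < i -> in_Ical I w mu i alpha -> pad n alpha \notin I.
Proof.
move=> i_gt0 [size_alpha [alpha_lt _]]; have i1_lt : i.-1 < i by rewrite prednK.
have := lt_ext_fI_notin (alpha_lt _ i1_lt).
by rewrite -take_nth ?size_alpha // prednK // -size_alpha take_size.
Qed.

End Sequences.

Theorem lemma2p9 (n : nat) (I : pred (mon n)) (w : mon n) (mu : nat) :
  monomial_ideal I -> almost_revlex I -> last_generator I w ->
  0 < cf w mu.-1 -> (forall j, mu <= j -> cf w j = 0) ->
  2 <= mu ->
  forall i, 1 <= i <= mu.-1 ->
  forall alpha : seq nat, in_Ical I w mu i alpha ->
  [/\ (exists t, fI I alpha = Some t /\ 0 < t),
      (forall t, fI I alpha = Some t -> mingen I (pad n (rcons alpha t)))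
    & (forall j, j < i -> 1 <= nth 0 alpha j ->
         le_ext (omap succn (fI I alpha))
                (fI I (set_nth 0 alpha j (nth 0 alpha j).-1)))].
Proof.
move=> I_ideal I_arl w_last w_s w_zero mu_ge2 i /andP[i_gt0 i_le] alpha alpha_in.
have s_lt : mu.-1 < n by move: w_s; rewrite /cf; case: insubP.
have k_lt : i < n := leq_ltn_trans i_le s_lt.
pose s : 'I_n := Ordinal s_lt; pose k : 'I_n := Ordinal k_lt.
have size_alpha : (k : nat) = size alpha by case: alpha_in.
set a := pad n alpha.
have a_supp (u : 'I_n) : k <= u -> a u = 0 by rewrite size_alpha; apply: pad_default.
have a_notin : a \notin I := in_Ical_notin i_gt0 alpha_in.
have [u au] : exists u, upd a k u \in I.
  apply: (exists_upd_mem I_ideal I_arl w_last.1 (s := s)) a_supp i_le _.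
  - by move: w_s; rewrite /cf insubT.
  - by move=> v sv; move: (w_zero v); rewrite /cf valK; apply; rewrite /= in sv; lia.
  - exact: alpha_in.2.2.
have [t ft] := minx_ex (P := fun u => upd a k u \in I) au.
have I_stable := almost_revlex_strongly_stable I_ideal I_arl.
rewrite (fI_pad I size_alpha) ft; split.
- by exists t; split=> //; apply: fiber_pos ft.
- by move=> _ [<-]; rewrite (pad_rcons _ size_alpha); apply: fiber_mingen ft.
- move=> j j_lt alpha_j; pose j' : 'I_n := Ordinal (ltn_trans j_lt k_lt).
  have a_j : a j' = nth 0 alpha j by rewrite ffunE.
  rewrite (fI_pad I (k := k)); last by rewrite size_set_nth -size_alpha (maxn_idPr j_lt).
  rewrite -a_j (pad_set_nth alpha j').
  by apply: (fiber_dec I_ideal I_stable a_supp a_notin ft); rewrite ?a_j.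
Qed.
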